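(* Let $X$ be a quasi-lattice and $x,y\in X$. Then $x+y\le\lceil x\rceil+\lceil y\rceil$ and $-(x+y)\le\lceil x\rceil+\lceil y\rceil$; moreover, each of $x-\lceil y\rceil$, $-x-\lceil y\rceil$, $y-\lceil x\rceil$, $-y-\lceil x\rceil$ is $\le\lceil x+y\rceil$ and $\le\lceil x-y\rceil$.
   Context: A pre-ordered Banach space is a real Banach space $X$ with a cone $X_+$ ($X_++X_+\subseteq X_+$, $\lambda X_+\subseteq X_+$ for $\lambda\ge0$); $x\le y$ means $y-x\in X_+$. For $A\subseteq X$, $\upsilon(A)$ is the set of upper bounds of $A$ and $\mu(A)$ the set of minimal upper bounds. Let $\sigma_{x,y}(z)=\|z-x\|+\|z-y\|$. A pre-ordered Banach space with closed cone is a $\upsilon$-quasi-lattice (resp. $\mu$-quasi-lattice) if for all $x,y$ the set $\upsilon(\{x,y\})$ (resp. $\mu(\{x,y\})$) is non-empty and contains a unique minimizer of $\sigma_{x,y}$ over that set, called the quasi-supremum $x\tilde\vee y$. A quasi-lattice is either of these. Define $\lceil x\rceil:=(-x)\tilde\vee x$. *)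

From mathcomp Require Import all_boot all_order all_algebra.
From mathcomp Require Import all_classical all_reals all_analysis.
Import Order.TTheory GRing.Theory Num.Theory.
Import numFieldNormedType.Exports.
Set Implicit Arguments. Unset Strict Implicit. Unset Printing Implicit Defensive.
Local Open Scope classical_set_scope.
Local Open Scope ring_scope.

Section QuasiLattice.
Variables (R : realType) (V : completeNormedModType R).

Definition is_cone (C : set V) : Prop :=
  (forall a b, C a -> C b -> C (a + b)) /\
  (forall (l : R) a, 0 <= l -> C a -> C (l *: a)).

Definition cle (C : set V) (x y : V) : Prop := C (y - x).

Definition ubounds (C : set V) (A : set V) : set V :=
  [set z | forall a, A a -> cle C a z].

Definition min_ubounds (C : set V) (A : set V) : set V :=
  [set z | ubounds C A z /\
           (forall w, ubounds C A w -> cle C w z -> w = z)].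

Inductive qkind := Upsilon | Mu.

Definition bset (k : qkind) (C : set V) (A : set V) : set V :=
  match k with Upsilon => ubounds C A | Mu => min_ubounds C A end.

Definition sigma (x y z : V) : R := `|z - x| + `|z - y|.

Definition sigma_min (S : set V) (x y z : V) : Prop :=
  S z /\ forall w, S w -> sigma x y z <= sigma x y w.

Definition is_qsup (k : qkind) (C : set V) (x y z : V) : Prop :=
  sigma_min (bset k C [set x; y]) x y z /\
  forall w, sigma_min (bset k C [set x; y]) x y w -> w = z.

Definition quasi_lattice (k : qkind) (C : set V) : Prop :=
  is_cone C /\ closed C /\
  forall x y, (bset k C [set x; y] !=set0) /\ exists z, is_qsup k C x y z.

(* the quasi-supremum x ~v y (meaningful when quasi_lattice k C holds) *)
Definition qsup (k : qkind) (C : set V) (x y : V) : V :=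
  xget 0 [set z | is_qsup k C x y z].

Definition qceil (k : qkind) (C : set V) (x : V) : V := qsup k C (- x) x.

End QuasiLattice.

(* Every upper bound u of {-z, z} satisfies -u <= z <= u, so the quasi-supremum
   c z := (-z) ~v z behaves like an absolute value of z.  Each inequality then
   follows by adding two of these bounds, e.g.
   x - c y <= x + y <= c (x + y), using that c is even. *)
From mathcomp Require Import all_boot all_order all_algebra.
From mathcomp Require Import all_classical all_reals all_analysis.
Import Order.TTheory GRing.Theory Num.Theory.
Import numFieldNormedType.Exports.
Set Implicit Arguments. Unset Strict Implicit. Unset Printing Implicit Defensive.
Local Open Scope classical_set_scope.
Local Open Scope ring_scope.

Section ConeOrder.
Variables (R : realType) (V : completeNormedModType R) (C : set V).

Lemma cle_addl (u a b : V) : cle C a b -> cle C (u + a) (u + b).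
Proof. by rewrite /cle opprD addrACA subrr add0r. Qed.

Lemma cle_opp (a b : V) : cle C a b -> cle C (- b) (- a).
Proof. by rewrite /cle opprK addrC. Qed.

Hypothesis Cadd : forall a b, C a -> C b -> C (a + b).

Lemma cle_trans (a b c : V) : cle C a b -> cle C b c -> cle C a c.
Proof. by move=> hab hbc; rewrite /cle -(subrKA b); apply: Cadd. Qed.

Lemma cle_add (a b u v : V) : cle C a b -> cle C u v -> cle C (a + u) (b + v).
Proof. by move=> hab huv; rewrite /cle opprD addrACA; apply: Cadd. Qed.

End ConeOrder.

Section QuasiCeiling.
Variables (R : realType) (V : completeNormedModType R).
Variables (C : set V) (k : qkind).

Lemma sigmaC (x y : V) : sigma x y = sigma y x.
Proof. by apply/funext => z; rewrite /sigma addrC. Qed.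

Lemma qsupC (x y : V) : qsup k C x y = qsup k C y x.
Proof. by rewrite /qsup /is_qsup /sigma_min sigmaC setUC. Qed.

Lemma qceilN (z : V) : qceil k C (- z) = qceil k C z.
Proof. by rewrite /qceil opprK qsupC. Qed.

Lemma qceilB (u v : V) : qceil k C (u - v) = qceil k C (v - u).
Proof. by rewrite -opprB qceilN. Qed.

Hypothesis hQL : quasi_lattice k C.

Lemma qsup_ub (x y : V) : ubounds C [set x; y] (qsup k C x y).
Proof.
have [_ [_ /(_ x y) [_ ex]]] := hQL.
have [[Hs _] _] := xgetPex 0 ex.
by case: k Hs => // -[].
Qed.

Lemma le_qceil (z : V) : cle C z (qceil k C z).
Proof. by apply: qsup_ub; right. Qed.

Lemma le_qceilN (z : V) : cle C (- z) (qceil k C z).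
Proof. by apply: qsup_ub; left. Qed.

Lemma sub_qceil_le_qceil (u v : V) :
  cle C (u - qceil k C v) (qceil k C (u + v)) /\
  cle C (u - qceil k C v) (qceil k C (u - v)).
Proof.
have [[Cadd _] _] := hQL.
have Nqv_le_v : cle C (- qceil k C v) v.
  by have := cle_opp (le_qceilN v); rewrite opprK.
have Nqv_le_Nv : cle C (- qceil k C v) (- v) := cle_opp (le_qceil v).
split.
- exact: (cle_trans Cadd (cle_addl u Nqv_le_v) (le_qceil (u + v))).
- exact: (cle_trans Cadd (cle_addl u Nqv_le_Nv) (le_qceil (u - v))).
Qed.

Lemma opp_sub_qceil_le_qceil (u v : V) :
  cle C (- u - qceil k C v) (qceil k C (u + v)) /\
  cle C (- u - qceil k C v) (qceil k C (u - v)).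
Proof.
have [le_sub le_add] := sub_qceil_le_qceil (- u) v.
rewrite -[- u - v]opprD qceilN in le_add.
by rewrite [- u + v]addrC qceilB in le_sub.
Qed.

End QuasiCeiling.

Theorem theorem5p11 (R : realType) (V : completeNormedModType R)
  (C : set V) (k : qkind) (hQL : quasi_lattice k C) (x y : V) :
  let c := qceil k C in
  cle C (x + y) (c x + c y) /\
  cle C (- (x + y)) (c x + c y) /\
  (cle C (x - c y) (c (x + y)) /\ cle C (x - c y) (c (x - y))) /\
  (cle C (- x - c y) (c (x + y)) /\ cle C (- x - c y) (c (x - y))) /\
  (cle C (y - c x) (c (x + y)) /\ cle C (y - c x) (c (x - y))) /\
  (cle C (- y - c x) (c (x + y)) /\ cle C (- y - c x) (c (x - y))).
Proof.
rewrite /=; have [[Cadd _] _] := hQL.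
have [xy_s xy_d] := sub_qceil_le_qceil hQL x y.
have [yx_s yx_d] := sub_qceil_le_qceil hQL y x.
have [nxy_s nxy_d] := opp_sub_qceil_le_qceil hQL x y.
have [nyx_s nyx_d] := opp_sub_qceil_le_qceil hQL y x.
rewrite [y + x]addrC in yx_s nyx_s; rewrite qceilB in yx_d nyx_d.
split; first exact: (cle_add Cadd (le_qceil hQL x) (le_qceil hQL y)).
split; first by rewrite opprD;
  exact: (cle_add Cadd (le_qceilN hQL x) (le_qceilN hQL y)).
by do ?split.
Qed.
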